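(* Let $(R,\cdot,\alpha)$ be a weakly unital hom-associative ring with weak unit $e$, and let $\delta$ be a derivation on $R$ with $\alpha\circ\delta=\delta\circ\alpha$. Extend $\alpha$ homogeneously to the differential polynomial ring $R[X;\mathrm{id}_R,\delta]$. Then: (i) $a\cdot\delta^n(e)=\delta^n(e)\cdot a=0$ for all $a\in R$ and $n\in\mathbb{N}_{>0}$; (ii) $e=eX^0$ is a weak unit in $R[X;\mathrm{id}_R,\delta]$, i.e. $e\cdot q=q\cdot e=\alpha(q)$ for all $q\in R[X;\mathrm{id}_R,\delta]$; (iii) for every $q=\sum_{i=0}^nq_iX^i\in R[X;\mathrm{id}_R,\delta]$, $\ eX\cdot q-q\cdot eX=\sum_{i=0}^n\alpha(\delta(q_i))X^i$.
   Context: A hom-associative ring is a triple $(R,\cdot,\alpha)$ where $R$ is an abelian group with a biadditive (not necessarily associative or unital) multiplication and an additive map $\alpha$ with $\alpha(a)\cdot(b\cdot c)=(a\cdot b)\cdot\alpha(c)$ for all $a,b,c$. It is weakly unital with weak unit $e$ if $e\cdot a=a\cdot e=\alpha(a)$ for all $a\in R$. A derivation is an additive map $\delta$ with $\delta(ab)=a\delta(b)+\delta(a)b$. The differential polynomial ring $R[X;\mathrm{id}_R,\delta]$ is the set of formal sums $\sum_{i\in\mathbb{N}}a_iX^i$ ($a_i\in R$, finitely many nonzero) with coefficientwise addition and the distributive multiplication $aX^m\cdot bX^n=\sum_{i=0}^m\binom{m}{i}\big(a\cdot\delta^{m-i}(b)\big)X^{i+n}$; $R$ is identified with $RX^0$,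 and $eX$ denotes the element with coefficient $e$ at $X^1$ and $0$ elsewhere. $\mathbb{N}$ is the non-negative integers, $\mathbb{N}_{>0}$ the positive ones. The homogeneous extension of $\alpha$ is $\alpha\left(\sum_ia_iX^i\right):=\sum_i\alpha(a_i)X^i$. *)

From HB Require Import structures.
From mathcomp Require Import all_boot all_order all_algebra.
Set Implicit Arguments. Unset Strict Implicit. Unset Printing Implicit Defensive.
Import GRing.Theory.
Local Open Scope ring_scope.

Section DiffPoly.
Variable R : zmodType.

Definition additive_map (f : R -> R) : Prop := forall x y, f (x + y) = f x + f y.

Definition biadditive (mul : R -> R -> R) : Prop :=
  (forall a b c, mul (a + b) c = mul a c + mul b c) /\
  (forall a b c, mul a (b + c) = mul a b + mul a c).

Definition hom_assoc_ring (mul : R -> R -> R) (alpha : R -> R) : Prop :=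
  [/\ biadditive mul, additive_map alpha &
      forall a b c, mul (alpha a) (mul b c) = mul (mul a b) (alpha c)].

Definition weak_unit (mul : R -> R -> R) (alpha : R -> R) (e : R) : Prop :=
  forall a, mul e a = alpha a /\ mul a e = alpha a.

Definition derivation (mul : R -> R -> R) (delta : R -> R) : Prop :=
  additive_map delta /\
  forall a b, delta (mul a b) = mul a (delta b) + mul (delta a) b.

(* Elements of R[X; id_R, delta] are represented by finite coefficient
   sequences p (p`_i is the coefficient of X^i; trailing zeros allowed).
   The coefficient of X^k in the product p * q, where
   aX^m * bX^n = sum_{i=0}^m binom(m,i) (a * delta^(m-i)(b)) X^(i+n). *)
Definition dpmul_coef (mul : R -> R -> R) (delta : R -> R)
    (p q : seq R) (k : nat) : R :=
  \sum_(m < size p) \sum_(n < size q) \sum_(i < m.+1)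
    (if (i + n == k)%N
     then (mul p`_m (iter (m - i) delta q`_n)) *+ 'C(m, i)
     else 0).

Definition dpalpha (alpha : R -> R) (p : seq R) : seq R := map alpha p.

End DiffPoly.

From HB Require Import structures.
From mathcomp Require Import all_boot all_order all_algebra.
Set Implicit Arguments. Unset Strict Implicit.
Import GRing.Theory.
Local Open Scope ring_scope.

(* Differentiating e a = alpha a = a e with the Leibniz rule, and using
   delta (alpha a) = alpha (delta a) = e (delta a), shows that delta e
   annihilates R on both sides; as the two-sided annihilator is stable under
   any derivation, so do all delta^n e with n > 0.  Hence in
   (x X^m)(e X^j) = sum_i C(m,i) (x delta^(m-i) e) X^(i+j) only the term
   i = m survives, which gives q e = alpha q and q (eX) = alpha(q) X, while
   (eX) q = e delta(q) + e q X directly from the product formula. *)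

Lemma additive_map0 (R : zmodType) (f : R -> R) : additive_map f -> f 0 = 0.
Proof. by move=> fD; apply: (addrI (f 0)); rewrite -fD !addr0. Qed.

Lemma big_ord_addn_eq (V : zmodType) (F : nat -> V) (s j k : nat) :
  (forall n, (s <= n)%N -> F n = 0) ->
  \sum_(n < s) (if (j + n == k)%N then F n else 0) =
  if (j <= k)%N then F (k - j)%N else 0.
Proof.
move=> F0; case: (leqP j k) => [le_jk | lt_kj]; last first.
  by apply: big1 => n _; rewrite ifF //; apply/negbTE; rewrite neq_ltn ltn_addr ?orbT.
have eq_shift (n : 'I_s) : (j + n == k)%N = (val n == k - j)%N.
  by apply/eqP/eqP => [<- | ->]; [rewrite addKn | rewrite subnKC].
under eq_bigr => n _ do rewrite eq_shift.
case: (ltnP (k - j) s) => [lt_ks | le_sk].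
  rewrite (bigD1 (Ordinal lt_ks)) //= eqxx big1 ?addr0 // => n ne_n.
  by rewrite ifF //; apply: contraNF ne_n => /eqP eq_n; apply/eqP/val_inj.
rewrite F0 // big1 // => n _; rewrite ifF //; apply/negbTE.
by rewrite neq_ltn (leq_trans (ltn_ord n) le_sk).
Qed.

Lemma sum_coef_ncons (R V : zmodType) (g : R -> V) (q : seq R) (j k : nat) :
  g 0 = 0 ->
  \sum_(n < size q) (if (j + n == k)%N then g q`_n else 0) = g (ncons j 0 q)`_k.
Proof.
move=> g0; rewrite (big_ord_addn_eq (F := fun n => g q`_n)) => [|n le_qn].
  by rewrite nth_ncons ltnNge; case: leqP.
by rewrite nth_default.
Qed.

Lemma nth_dpalpha (R : zmodType) (alpha : R -> R) (q : seq R) (k : nat) :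
  alpha 0 = 0 -> (dpalpha alpha q)`_k = alpha q`_k.
Proof.
move=> alpha0; case: (ltnP k (size q)) => [lt_kq | le_qk].
  by rewrite (nth_map 0).
by rewrite !nth_default ?size_map.
Qed.

Section ProductWithConstants.
Variables (R : zmodType) (mul : R -> R -> R) (delta : R -> R).
Hypotheses (mulD : biadditive mul) (deltaD : additive_map delta).

Lemma bimul0r x : mul 0 x = 0.
Proof. exact: additive_map0 (fun a b => mulD.1 a b x). Qed.

Lemma bimulr0 x : mul x 0 = 0.
Proof. exact: additive_map0 (mulD.2 x). Qed.

Lemma dpmul_coef_constl c q k : dpmul_coef mul delta [:: c] q k = mul c q`_k.
Proof.
rewrite /dpmul_coef big_ord1 /=.
rewrite -(sum_coef_ncons q 0 k (bimulr0 c)); apply: eq_bigr => n _.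
by rewrite big_ord1 /= mulr1n.
Qed.

Lemma dpmul_coef_Xl c q k :
  dpmul_coef mul delta [:: 0; c] q k = mul c (delta q`_k) + mul c (0 :: q)`_k.
Proof.
rewrite /dpmul_coef big_ord_recl big_ord1 /= big1 ?add0r; last first.
  by move=> n _; apply: big1 => i _; rewrite bimul0r mul0rn if_same.
have delta_c0 : mul c (delta 0) = 0 by rewrite additive_map0 // bimulr0.
rewrite -(sum_coef_ncons (g := fun a => mul c (delta a)) q 0 k delta_c0).
rewrite -(sum_coef_ncons q 1 k (bimulr0 c)).
by rewrite -big_split; apply: eq_bigr => n _; rewrite big_ord_recl big_ord1 /= !mulr1n.
Qed.

End ProductWithConstants.

Section Annihilator.
Variables (R : zmodType) (mul : R -> R -> R) (delta : R -> R).
Hypothesis deltaM : derivation mul delta.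

Definition annihilating (x : R) := forall a, mul a x = 0 /\ mul x a = 0.

Lemma annihilating_delta x : annihilating x -> annihilating (delta x).
Proof.
have delta0 := additive_map0 deltaM.1.
move=> annx a; have := deltaM.2 a x; have := deltaM.2 x a.
by rewrite !(annx _).1 !(annx _).2 delta0 add0r addr0 => <- <-.
Qed.

End Annihilator.

Section WeakUnit.
Variables (R : zmodType) (mul : R -> R -> R) (alpha delta : R -> R) (e : R).
Hypotheses (mulD : biadditive mul) (eU : weak_unit mul alpha e).
Hypothesis deltaM : derivation mul delta.
Hypothesis alpha_deltaC : forall x, alpha (delta x) = delta (alpha x).

Lemma alpha0 : alpha 0 = 0.
Proof. by rewrite -(eU 0).1 bimulr0. Qed.

Lemma annihilating_delta_unit : annihilating mul (delta e).
Proof.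
have addr_fix0 (x y : R) : x = y + x -> y = 0.
  by rewrite -{1}(add0r x) => /addIr.
move=> a; have := deltaM.2 e a; have := deltaM.2 a e.
rewrite (eU a).1 (eU a).2 -alpha_deltaC (eU (delta a)).1 (eU (delta a)).2.
by move=> /addr_fix0 ->; rewrite addrC => /addr_fix0 ->.
Qed.

Lemma annihilating_iter_delta_unit n : (0 < n)%N -> annihilating mul (iter n delta e).
Proof.
case: n => // n _; elim: n => [|n IHn]; first exact: annihilating_delta_unit.
exact: annihilating_delta deltaM _ IHn.
Qed.

Lemma coef_mul_monomial_unit x m j k :
  \sum_(i < m.+1) (if (i + j == k)%N
                   then mul x (iter (m - i) delta e) *+ 'C(m, i) else 0)
  = if (m + j == k)%N then alpha x else 0.
Proof.
rewrite big_ord_recr /= subnn binn mulr1n (eU x).2 big1 ?add0r // => i _.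
have lt_im : (0 < m - i)%N by rewrite subn_gt0.
by rewrite (annihilating_iter_delta_unit lt_im x).1 mul0rn if_same.
Qed.

Lemma dpmul_coef_unitr q k : dpmul_coef mul delta q [:: e] k = alpha q`_k.
Proof.
rewrite -(sum_coef_ncons q 0 k alpha0); apply: eq_bigr => m _.
by rewrite big_ord1 /= coef_mul_monomial_unit addn0.
Qed.

Lemma dpmul_coef_unitXr q k :
  dpmul_coef mul delta q [:: 0; e] k = alpha (0 :: q)`_k.
Proof.
have delta0 := additive_map0 deltaM.1.
rewrite -(sum_coef_ncons q 1 k alpha0); apply: eq_bigr => m _.
rewrite big_ord_recl big_ord1 /= coef_mul_monomial_unit addnC big1 ?add0r //.
by move=> i _; rewrite iter_fix // bimulr0 // mul0rn if_same.
Qed.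

End WeakUnit.

Theorem mainTheorem10 (R : zmodType) (mul : R -> R -> R) (alpha delta : R -> R)
    (e : R)
    (hR : hom_assoc_ring mul alpha) (he : weak_unit mul alpha e)
    (hd : derivation mul delta) (hcomm : forall x, alpha (delta x) = delta (alpha x)) :
  (* (i) *)
  (forall (a : R) (n : nat), (0 < n)%N ->
     mul a (iter n delta e) = 0 /\ mul (iter n delta e) a = 0) /\
  (* (ii) e = eX^0 is a weak unit of R[X; id_R, delta] *)
  (forall (q : seq R) (k : nat),
     dpmul_coef mul delta [:: e] q k = (dpalpha alpha q)`_k /\
     dpmul_coef mul delta q [:: e] k = (dpalpha alpha q)`_k) /\
  (* (iii) eX * q - q * eX = sum alpha(delta q_i) X^i *)
  (forall (q : seq R) (k : nat),
     dpmul_coef mul delta [:: 0; e] q k - dpmul_coef mul delta q [:: 0; e] k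
     = alpha (delta q`_k)).
Proof.
have [mulD _ _] := hR.
split; [|split].
- by move=> a n /(annihilating_iter_delta_unit he hd hcomm); apply.
- move=> q k; rewrite nth_dpalpha ?(alpha0 mulD he) // (dpmul_coef_constl _ mulD).
  by rewrite (he _).1 (dpmul_coef_unitr mulD he hd hcomm).
- move=> q k; rewrite (dpmul_coef_Xl mulD hd.1) (dpmul_coef_unitXr mulD he hd hcomm).
  by rewrite !(he _).1 addrK.
Qed.
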